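(* Let $\mathcal X\subseteq[0,1]$ be a Borel set with $0,1\in\mathcal X$, fix $\mu\in(0,1)$ and let $I_\mu=[(\mu-1)^{-1},\mu^{-1}]$. For $\lambda\in I_\mu$ let $E_\lambda(x)=1+\lambda(x-\mu)$ and for $\alpha\in\mathbb R$ let $E^{\mathrm H}_\alpha(x)=e^{\alpha(x-\mu)-\alpha^2/8}$, for $x\in\mathcal X$. Then for each $\alpha\in\mathbb R$ there is $\lambda_\alpha\in I_\mu$ such that $E_{\lambda_\alpha}(x)\ge E^{\mathrm H}_\alpha(x)$ for all $x\in\mathcal X$. On the other hand, for any non-zero $\lambda\in I_\mu$ and every $\alpha\in\mathbb R$, there is at least one point $x_\alpha\in\mathcal X$ such that $E^{\mathrm H}_\alpha(x_\alpha)<E_\lambda(x_\alpha)$. *)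

From HB Require Import structures.
From mathcomp Require Import all_boot all_order all_algebra.
From mathcomp Require Import all_classical all_reals all_analysis.
Set Implicit Arguments. Unset Strict Implicit. Unset Printing Implicit Defensive.
Import Order.TTheory GRing.Theory Num.Theory.
Local Open Scope ring_scope.
Local Open Scope classical_set_scope.

Definition E_lin (R : realType) (mu lambda x : R) : R := 1 + lambda * (x - mu).

Definition E_hoef (R : realType) (mu alpha x : R) : R :=
  expR (alpha * (x - mu) - alpha ^+ 2 / 8).

Definition I_mu (R : realType) (mu : R) : set R := `[(mu - 1)^-1, mu^-1].

Definition borel_set (R : realType) (A : set R) : Prop :=
  @measurable _ (measurableTypeR R) A.

From HB Require Import structures.
From mathcomp Require Import all_boot all_order all_algebra.
From mathcomp Require Import all_classical all_reals all_analysis.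
From mathcomp Require Import ring lra.
Import Order.TTheory GRing.Theory Num.Theory numFieldNormedType.Exports.
Local Open Scope ring_scope.
Local Open Scope classical_set_scope.
Set Implicit Arguments.
Unset Strict Implicit.

(** Everything rests on Hoeffding's lemma for the law on {0, 1} with mean mu,
    together with its equality case:
    (1 - mu) E^H_alpha(0) + mu E^H_alpha(1) <= 1, strictly unless alpha = 0.
    E^H_alpha is convex, so on [0, 1] it lies below its chord through 0 and 1;
    by Hoeffding's lemma that chord lies below the line E_lambda of the same
    slope lambda = E^H_alpha(1) - E^H_alpha(0), and this slope lies in I_mu.
    Conversely every E_lambda has mean 1 under the two-point law, so
    E^H_alpha >= E_lambda at both 0 and 1 contradicts the strict inequality
    when alpha != 0, and forces lambda = 0 when alpha = 0. *)

Section derivative_sign.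
Variable R : realType.
Implicit Types (a b c : R).

Lemma is_derive_gt0_lt (f df : R -> R) a b :
  (forall x, is_derive x (1 : R) f (df x)) ->
  (forall x, a < x < b -> 0 < df x) -> a < b -> f a < f b.
Proof.
move=> f_df df_gt0 ab.
have cf : continuous f.
  by move=> x; apply/differentiable_continuous/derivable1_diffP; case: (f_df x).
apply: (@gtr0_derive1_lt_cc _ f a b) => //.
- by move=> x; rewrite in_itv /= derive1E derive_val => /df_gt0.
- exact: continuous_subspaceT.
- by rewrite in_itv /= lexx ltW.
- by rewrite in_itv /= lexx ltW.
Qed.

Lemma is_derive_lt0_gt (f df : R -> R) a b :
  (forall x, is_derive x (1 : R) f (df x)) ->
  (forall x, a < x < b -> df x < 0) -> a < b -> f b < f a.
Proof.
move=> f_df df_lt0 ab; rewrite -ltrN2.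
by apply: (@is_derive_gt0_lt (- f) (- df)) => // x /df_lt0; rewrite oppr_gt0.
Qed.

Lemma is_derive_gt0_but1_lt (f df : R -> R) c :
  (forall x, is_derive x (1 : R) f (df x)) ->
  (forall x, x != c -> 0 < df x) -> {homo f : x y / x < y}.
Proof.
move=> f_df df_gt0 x y xy.
have gt0_off_c u v : c \notin `]u, v[%R -> forall z, u < z < v -> 0 < df z.
  by move=> cuv z zuv; apply: df_gt0; apply: contraNneq cuv => <-; rewrite in_itv.
have [|c_out] := boolP (c \in `]x, y[%R); last first.
  exact: is_derive_gt0_lt f_df (gt0_off_c _ _ c_out) xy.
rewrite in_itv /= => /andP[xc cy].
apply: (@lt_trans _ _ (f c)); apply: is_derive_gt0_lt => //; apply: gt0_off_c.
- by rewrite in_itv /= ltxx andbF.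
- by rewrite in_itv /= ltxx.
Qed.

End derivative_sign.

Section hoeffding_two_point.
Variables (R : realType) (mu : R).
Hypotheses (mu_gt0 : 0 < mu) (mu_lt1 : mu < 1).

Definition bernoulli_mgf (u : R) := 1 - mu + mu * expR u.

(** [hoeffding_gap u] is [ln] of the ratio of the sub-Gaussian bound to the
    moment generating function of the centred law. *)
Definition hoeffding_gap (u : R) := u ^+ 2 / 8 + mu * u - ln (bernoulli_mgf u).

Definition hoeffding_gap' (u : R) := u / 4 + mu - 1 + (1 - mu) / bernoulli_mgf u.

Lemma bernoulli_mgf_gt0 u : 0 < bernoulli_mgf u.
Proof. by rewrite /bernoulli_mgf addr_gt0 ?subr_gt0 ?mulr_gt0 ?expR_gt0. Qed.

Lemma is_derive_bernoulli_mgf u :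
  is_derive u (1 : R) bernoulli_mgf (mu * expR u).
Proof. by apply: is_derive_eq; rewrite add0r mul1r. Qed.

Lemma is_derive_hoeffding_gap u :
  is_derive u (1 : R) hoeffding_gap (hoeffding_gap' u).
Proof.
have D_gt0 := bernoulli_mgf_gt0 u.
have dlnD : is_derive u (1 : R) (@ln R \o bernoulli_mgf)
    ((bernoulli_mgf u)^-1 * (mu * expR u)).
  exact: is_derive1_comp (is_derive1_ln D_gt0) (is_derive_bernoulli_mgf u).
have -> : hoeffding_gap = fun u => u ^+ 2 / 8 + mu * u - (@ln R \o bernoulli_mgf) u by [].
apply: is_derive_eq.
rewrite !scaler0 add0r /GRing.scale /= !mulr1.
by rewrite /hoeffding_gap' /bernoulli_mgf in D_gt0 *; field; lra.
Qed.

(** The second derivative [1/4 - p (1 - p)], with [p = mu e^u / mgf u],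
    written as a square: it vanishes only where [p = 1/2]. *)
Lemma is_derive_hoeffding_gap' u :
  is_derive u (1 : R) hoeffding_gap'
    (((1 - mu) - mu * expR u) ^+ 2 / (4 * bernoulli_mgf u ^+ 2)).
Proof.
have D_gt0 := bernoulli_mgf_gt0 u.
have dinvD : is_derive u (1 : R) (fun v => (bernoulli_mgf v)^-1)
    (- (bernoulli_mgf u) ^- 2 *: (mu * expR u)).
  by apply: is_deriveV; [rewrite gt_eqF | exact: is_derive_bernoulli_mgf].
have -> : hoeffding_gap' = fun u => u / 4 + mu - 1 + (1 - mu) * (bernoulli_mgf u)^-1 by [].
apply: is_derive_eq.
rewrite /GRing.scale /=.
by rewrite /bernoulli_mgf in D_gt0 *; field; lra.
Qed.

Lemma hoeffding_gap'_incr : {homo hoeffding_gap' : x y / x < y}.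
Proof.
apply: (is_derive_gt0_but1_lt (c := ln ((1 - mu) / mu)) is_derive_hoeffding_gap').
move=> u u_neq; apply: divr_gt0; last by rewrite mulr_gt0 ?exprn_gt0 ?bernoulli_mgf_gt0.
rewrite exprn_even_gt0 //=; apply: contra u_neq => /eqP crit.
have -> : (1 - mu) / mu = expR u by rewrite (subr0_eq crit) mulrC mulKf ?gt_eqF.
by rewrite expRK.
Qed.

Lemma hoeffding_gap_gt0 a : a != 0 -> 0 < hoeffding_gap a.
Proof.
have gap0 : hoeffding_gap 0 = 0.
  by rewrite /hoeffding_gap /bernoulli_mgf expR0 mulr1 subrK ln1; ring.
have gap'0 : hoeffding_gap' 0 = 0.
  by rewrite /hoeffding_gap' /bernoulli_mgf expR0 mulr1 subrK divr1; ring.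
move=> a_neq0; rewrite -gap0.
case: (ltgtP a 0) => [a_lt0|a_gt0|a0]; last by rewrite a0 eqxx in a_neq0.
- apply: (is_derive_lt0_gt is_derive_hoeffding_gap) => // x /andP[_ x_lt0].
  by rewrite -gap'0; exact: hoeffding_gap'_incr.
- apply: (is_derive_gt0_lt is_derive_hoeffding_gap) => // x /andP[x_gt0 _].
  by rewrite -gap'0; exact: hoeffding_gap'_incr.
Qed.

Lemma hoeffding_two_point_lt a : a != 0 ->
  (1 - mu) * E_hoef mu a 0 + mu * E_hoef mu a 1 < 1.
Proof.
move=> /hoeffding_gap_gt0; rewrite /hoeffding_gap subr_gt0.
set t := a ^+ 2 / 8 + mu * a => lnD_lt.
have E0 : E_hoef mu a 0 = expR (- t) by rewrite /E_hoef /t; congr expR; ring.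
have E1 : E_hoef mu a 1 = expR a * expR (- t).
  by rewrite /E_hoef /t -expRD; congr expR; ring.
rewrite E0 E1 mulrA -mulrDl -/(bernoulli_mgf a) expRN ltr_pdivrMr ?expR_gt0 // mul1r.
by rewrite -[bernoulli_mgf a]lnK ?posrE ?bernoulli_mgf_gt0 // ltr_expR.
Qed.

Lemma hoeffding_two_point_le a :
  (1 - mu) * E_hoef mu a 0 + mu * E_hoef mu a 1 <= 1.
Proof.
have [->|a_neq0] := eqVneq a 0; last exact/ltW/hoeffding_two_point_lt.
by rewrite /E_hoef !mul0r expr0n /= mul0r subr0 expR0 !mulr1 subrK.
Qed.

Lemma E_lin_mean lambda : (1 - mu) * E_lin mu lambda 0 + mu * E_lin mu lambda 1 = 1.
Proof. by rewrite /E_lin; ring. Qed.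

Lemma chord_le_E_lin g0 g1 x : (1 - mu) * g0 + mu * g1 <= 1 ->
  (1 - x) * g0 + x * g1 <= E_lin mu (g1 - g0) x.
Proof. by rewrite /E_lin; lra. Qed.

Lemma chord_slope_in_I_mu g0 g1 : 0 < g0 -> 0 < g1 ->
  (1 - mu) * g0 + mu * g1 <= 1 -> I_mu mu (g1 - g0).
Proof.
move=> g0_gt0 g1_gt0 mean_le1; rewrite /I_mu /= in_itv /=.
have mu1_lt0 : mu - 1 < 0 by rewrite subr_lt0.
rewrite -[(mu - 1)^-1]div1r -[mu^-1]div1r ler_ndivrMr // ler_pdivlMr //.
by apply/andP; split; nra.
Qed.

Lemma E_hoef_lt_E_lin_at_0_or_1 alpha lambda : lambda != 0 ->
  E_hoef mu alpha 0 < E_lin mu lambda 0 \/ E_hoef mu alpha 1 < E_lin mu lambda 1.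
Proof.
move=> lambda_neq0; rewrite !ltNge; apply/orP; rewrite -negb_and; apply/negP.
move=> /andP[ge0 ge1].
have mean_ge1 : 1 <= (1 - mu) * E_hoef mu alpha 0 + mu * E_hoef mu alpha 1.
  by rewrite -[leLHS](E_lin_mean lambda) lerD // ler_wpM2l // ?subr_ge0 ltW.
have [alpha0|/hoeffding_two_point_lt] := eqVneq alpha 0; last by rewrite ltNge mean_ge1.
move: ge0 ge1; rewrite alpha0 /E_hoef /E_lin !mul0r expr0n /= mul0r subr0 expR0 !gerDl.
rewrite sub0r mulrN oppr_le0 pmulr_lge0 // pmulr_lle0 ?subr_gt0 // => ge0 le0.
by rewrite eq_le le0 ge0 in lambda_neq0.
Qed.

End hoeffding_two_point.

Lemma expR_le_chord (R : realType) (A B x : R) : 0 <= x <= 1 ->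
  expR ((1 - x) * A + x * B) <= (1 - x) * expR A + x * expR B.
Proof.
move=> /andP[x_ge0 x_le1].
have := convex_expR (Itv01 x_ge0 x_le1) B A.
by rewrite !convRE /= addrC [leRHS]addrC.
Qed.

Lemma E_hoef_le_chord (R : realType) (mu alpha x : R) : 0 <= x <= 1 ->
  E_hoef mu alpha x <= (1 - x) * E_hoef mu alpha 0 + x * E_hoef mu alpha 1.
Proof.
move=> x01; rewrite /E_hoef.
have -> : alpha * (x - mu) - alpha ^+ 2 / 8 =
    (1 - x) * (alpha * (0 - mu) - alpha ^+ 2 / 8) + x * (alpha * (1 - mu) - alpha ^+ 2 / 8).
  by ring.
exact: expR_le_chord.
Qed.

Theorem proposition2 (R : realType) (X : set R) (mu : R)
  (hXb : borel_set X) (hX01 : X `<=` `[0, 1])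
  (hX0 : X 0) (hX1 : X 1) (hmu0 : 0 < mu) (hmu1 : mu < 1) :
  (forall alpha : R, exists2 lambda : R, I_mu mu lambda &
      forall x, X x -> E_hoef mu alpha x <= E_lin mu lambda x) /\
  (forall lambda : R, I_mu mu lambda -> lambda != 0 ->
      forall alpha : R, exists2 x : R, X x &
        E_hoef mu alpha x < E_lin mu lambda x).
Proof.
split=> [alpha | lambda _ lambda_neq0 alpha].
- have mean_le1 := hoeffding_two_point_le hmu0 hmu1 alpha.
  exists (E_hoef mu alpha 1 - E_hoef mu alpha 0).
    exact: chord_slope_in_I_mu (expR_gt0 _) (expR_gt0 _) mean_le1.
  move=> x /hX01; rewrite /= in_itv /= => x01.
  exact: le_trans (E_hoef_le_chord _ _ x01) (chord_le_E_lin _ mean_le1).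
- have [lt0|lt1] := E_hoef_lt_E_lin_at_0_or_1 hmu0 hmu1 alpha lambda_neq0.
  + by exists 0.
  + by exists 1.
Qed.
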